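(* Let $K\subset\mathbb{R}^2$ be the infinitely generated self-similar set defined in the context. Then $K$ has positive two-dimensional Lebesgue measure and empty interior. Moreover, for Lebesgue almost every $y\in[0,1]$ the horizontal fibre $K_y:=\{x\in\mathbb{R}:(x,y)\in K\}$ contains a nontrivial interval.
   Context: For $k\ge 0$ and $n\ge 1$ let $t_{k,n}:=\frac{1}{2^k n}$. Define the similarities of $\mathbb{R}^2$: $U(x,y)=\left(\frac{x}{2},\frac{y+1}{2}\right)$, $D_0(x,y)=\left(\frac{x}{2},\frac{y}{2}\right)$, and $D_{k,n}(x,y)=\left(\frac{x+t_{k,n}}{2},\frac{y}{2}\right)$ for $k\ge0,n\ge1$. Let $\Phi$ be this countable family. $K$ is the unique non-empty compact set $K\subset\mathbb{R}^2$ satisfying $K=U(K)\cup D_0(K)\cup\bigcup_{k\ge0,n\ge1}D_{k,n}(K)$. *)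

From Stdlib Require Export Reals.
Open Scope R_scope.

Definition pt := (R * R)%type.

Definition t_kn (k n : nat) : R := / (2 ^ k * INR n).
Definition U (p : pt) : pt := (fst p / 2, (snd p + 1) / 2).
Definition D0 (p : pt) : pt := (fst p / 2, snd p / 2).
Definition Dkn (k n : nat) (p : pt) : pt := ((fst p + t_kn k n) / 2, snd p / 2).

Definition ifs_invariant (K : pt -> Prop) : Prop :=
  forall p, K p <->
    ((exists q, K q /\ p = U q) \/
     (exists q, K q /\ p = D0 q) \/
     (exists k n, (1 <= n)%nat /\ exists q, K q /\ p = Dkn k n q)).

(* Compactness in R^2 via Heine–Borel: closed and bounded. *)
Definition closed2 (K : pt -> Prop) : Prop :=
  forall (u : nat -> pt) (l : pt),
    (forall m, K (u m)) ->
    Un_cv (fun m => fst (u m)) (fst l) ->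
    Un_cv (fun m => snd (u m)) (snd l) -> K l.
Definition bounded2 (K : pt -> Prop) : Prop :=
  exists M, forall p, K p -> Rabs (fst p) <= M /\ Rabs (snd p) <= M.
Definition compact2 (K : pt -> Prop) : Prop := closed2 K /\ bounded2 K.
Definition nonempty2 (K : pt -> Prop) : Prop := exists p, K p.

(* Lebesgue null sets (via countable covers by boxes of small total volume). *)
Definition null2 (S : pt -> Prop) : Prop :=
  forall eps, 0 < eps ->
  exists a b c d : nat -> R,
    (forall i, a i <= b i /\ c i <= d i) /\
    (forall p, S p -> exists i,
        a i <= fst p <= b i /\ c i <= snd p <= d i) /\
    (forall N, sum_f_R0 (fun i => (b i - a i) * (d i - c i)) N <= eps).

Definition null1 (S : R -> Prop) : Prop :=
  forall eps, 0 < eps ->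
  exists a b : nat -> R,
    (forall i, a i <= b i) /\
    (forall y, S y -> exists i, a i <= y <= b i) /\
    (forall N, sum_f_R0 (fun i => b i - a i) N <= eps).

(* For a (compact, hence measurable) set, positive Lebesgue measure = not null. *)
Definition positive_measure2 (K : pt -> Prop) : Prop := ~ null2 K.

Definition empty_interior2 (K : pt -> Prop) : Prop :=
  ~ exists p r, 0 < r /\ forall q,
      Rabs (fst q - fst p) < r -> Rabs (snd q - snd p) < r -> K q.

Definition fibre_has_interval (K : pt -> Prop) (y : R) : Prop :=
  exists a b, a < b /\ forall x, a <= x <= b -> K (x, y).

(* The heights of the points of [K] have binary digits selecting the maps: the
   digit 1 is [U], the digit 0 is [D0] or some [Dkn].  Hence the abscissae above a
   dyadic cell of heights form the image of [[0, 1]] under the corresponding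
   compositions, and since the translations [0] and [1 / (2^k n)] accumulate only
   at [0], this set is nowhere dense: [K] has empty interior.

   Conversely, to reach a point [(x, y)] with [0 <= x <= 2^-b], follow the digits
   of [y] keeping a residual offset [<= 2^-b]: at a digit 0 subtract the largest
   translation [1/m] below twice the offset, which roughly squares it
   ([b -> 2b - 2]), at a digit 1 the offset just doubles ([b -> b - 1]).  While
   the budget [b] stays above [4] this never breaks down, and [K] being closed
   contains [(x, y)].  The heights where the budget eventually drops to [4] have
   measure at most [(9/10)^(b-4)], so almost every fibre contains an interval, and
   a Fubini-type covering inequality shows that [K] is not null. *)

From Stdlib Require Import Reals Lra Lia List Classical ZArith.
From Coquelicot Require Import Rcomplements.
From Coquelicot Require Coquelicot.
Import ListNotations.
Open Scope R_scope.

Lemma half_pow_pos n : 0 < (/2) ^ n.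
Proof. apply pow_lt; lra. Qed.

Lemma half_pow_le1 n : (/2) ^ n <= 1.
Proof. rewrite <- (pow1 n). apply pow_incr. lra. Qed.

Lemma half_pow_double_sub2 b : (1 <= b)%nat -> (/2) ^ (2 * b - 2) = 4 * ((/2) ^ b * (/2) ^ b).
Proof.
  intros Hb. rewrite <- pow_add. replace (b + b)%nat with ((2 * b - 2) + 2)%nat by lia.
  rewrite pow_add. simpl. field.
Qed.

Lemma half_pow_eventually_lt eps : 0 < eps ->
  exists N, forall n, (N <= n)%nat -> (/2) ^ n < eps.
Proof.
  intros Heps. destruct (pow_lt_1_zero (/2)) with (y := eps) as [N HN]; auto.
  { rewrite Rabs_right; lra. }
  exists N. intros n Hn. specialize (HN n Hn).
  rewrite Rabs_right in HN; [lra|]. apply Rle_ge, Rlt_le, half_pow_pos.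
Qed.

Lemma half_pow_lt_of_pos eps : 0 < eps -> exists N, (/2) ^ N < eps.
Proof.
  intros Heps. destruct (half_pow_eventually_lt eps Heps) as [N HN].
  exists N. auto.
Qed.

Lemma le_of_le_add_half_pow a c M : (forall n, a <= c + M * (/2) ^ n) -> a <= c.
Proof.
  intros H. apply Rnot_lt_le. intros Hca.
  assert (HM : 0 <= M) by (specialize (H 0%nat); simpl in H; lra).
  destruct (half_pow_lt_of_pos ((a - c) / (M + 1))) as [N HN].
  { apply Rdiv_lt_0_compat; lra. }
  specialize (H N). pose proof (half_pow_pos N).
  apply (Rmult_lt_compat_r (M + 1)) in HN; [|lra].
  unfold Rdiv in HN. rewrite Rmult_assoc, Rinv_l in HN; nra.
Qed.

Lemma Un_cv_add_half_pow (a C : R) (w : nat -> R) : (forall n, Rabs (w n) <= C) ->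
  Un_cv (fun n => a + (/2) ^ n * w n) a.
Proof.
  intros Hw eps Heps.
  assert (HC : 0 <= C) by (specialize (Hw 0%nat); pose proof (Rabs_pos (w 0%nat)); lra).
  destruct (half_pow_eventually_lt (eps / (C + 1))) as [N HN].
  { apply Rdiv_lt_0_compat; lra. }
  exists N. intros n Hn. specialize (HN n Hn). specialize (Hw n).
  unfold R_dist. replace (a + (/2) ^ n * w n - a) with ((/2) ^ n * w n) by ring.
  pose proof (half_pow_pos n).
  rewrite Rabs_mult, (Rabs_right ((/2) ^ n)) by lra.
  apply (Rmult_lt_compat_r (C + 1)) in HN; [|lra].
  unfold Rdiv in HN. rewrite Rmult_assoc, Rinv_l in HN by lra.
  pose proof (Rabs_pos (w n)). nra.
Qed.

Lemma partial_sum_ge_term (f : nat -> R) : (forall k, 0 <= f k) ->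
  forall N k, (k <= N)%nat -> f k <= sum_f_R0 f N.
Proof.
  intros Hf N k Hk. induction Hk.
  - destruct k; simpl; [lra|]. pose proof (cond_pos_sum f k Hf). lra.
  - simpl. pose proof (Hf (S m)). lra.
Qed.

Lemma partial_sum_mono (f : nat -> R) : (forall k, 0 <= f k) ->
  forall N M, (N <= M)%nat -> sum_f_R0 f N <= sum_f_R0 f M.
Proof. intros Hf N M H. induction H; [lra|]. simpl. pose proof (Hf (S m)). lra. Qed.

Lemma t_kn_bounds k n : (1 <= n)%nat -> 0 < t_kn k n <= 1.
Proof.
  intros Hn. unfold t_kn.
  assert (1 <= 2 ^ k) by (apply pow_R1_Rle; lra).
  assert (1 <= INR n) by (apply (le_INR 1); lia).
  split; [apply Rinv_0_lt_compat; nra|].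
  rewrite <- Rinv_1. apply Rinv_le_contravar; nra.
Qed.

Lemma t_kn_inv_nat k n : t_kn k n = / INR (2 ^ k * n).
Proof. unfold t_kn. rewrite mult_INR, pow_INR. reflexivity. Qed.

Lemma K_decompose (K : pt -> Prop) p : ifs_invariant K -> K p ->
  exists q t d, K q /\ 0 <= t <= 1 /\ (d = 0 \/ d = 1) /\
    fst p = (fst q + t) / 2 /\ snd p = (snd q + d) / 2.
Proof.
  intros HI Hp. apply HI in Hp.
  destruct Hp as [[q [Hq ->]] | [[q [Hq ->]] | [k [n [Hn [q [Hq ->]]]]]]].
  - exists q, 0, 1. simpl. repeat split; auto; lra.
  - exists q, 0, 0. simpl. repeat split; auto; lra.
  - exists q, (t_kn k n), 0. pose proof (t_kn_bounds k n Hn). simpl.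
    repeat split; auto; lra.
Qed.

Lemma K_in_unit_square (K : pt -> Prop) : compact2 K -> ifs_invariant K ->
  forall p, K p -> 0 <= fst p <= 1 /\ 0 <= snd p <= 1.
Proof.
  intros [_ [M HM]] HI.
  assert (Hn : forall n p, K p ->
    - M * (/2) ^ n <= fst p <= 1 + M * (/2) ^ n /\
    - M * (/2) ^ n <= snd p <= 1 + M * (/2) ^ n).
  { induction n as [|n IH]; intros p Hp.
    - destruct (HM p Hp) as [H1 H2].
      apply Rabs_le_between in H1; apply Rabs_le_between in H2. simpl. lra.
    - destruct (K_decompose K p HI Hp) as [q [t [d [Hq [Ht [Hd [E1 E2]]]]]]].
      destruct (IH q Hq) as [Hx Hy]. simpl. rewrite E1, E2.
      destruct Hd; subst d; split; split; nra. }
  intros p Hp. repeat split.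
  - apply Ropp_le_cancel. rewrite Ropp_0. apply (le_of_le_add_half_pow _ 0 M).
    intros n. destruct (Hn n p Hp). lra.
  - apply (le_of_le_add_half_pow _ 1 M). intros n. destruct (Hn n p Hp). lra.
  - apply Ropp_le_cancel. rewrite Ropp_0. apply (le_of_le_add_half_pow _ 0 M).
    intros n. destruct (Hn n p Hp). lra.
  - apply (le_of_le_add_half_pow _ 1 M). intros n. destruct (Hn n p Hp). lra.
Qed.

(** * Empty interior *)

Definition is_shift (t : R) : Prop := t = 0 \/ exists k n, (1 <= n)%nat /\ t = t_kn k n.

(* Binary words are read most significant digit first; [true] is the digit 1
   (map [U]), [false] the digit 0 (maps [D0] and [Dkn]).  [word_proj S w] holds the
   abscissae of the images of [S x R] under the compositions spelled by [w]. *)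
Fixpoint word_proj (S : R -> Prop) (w : list bool) (z : R) : Prop :=
  match w with
  | [] => S z
  | b :: w' => exists z' t, word_proj S w' z' /\
                 (if b then t = 0 else is_shift t) /\ z = (z' + t) / 2
  end.

Fixpoint in_cell (w : list bool) (y : R) : Prop :=
  match w with
  | [] => 0 < y < 1
  | b :: w' => in_cell w' (2 * y - (if b then 1 else 0))
  end.

Fixpoint binary_prefix (y : R) (N : nat) : list bool :=
  match N with
  | O => []
  | S N' => if Rlt_dec y (1/2) then false :: binary_prefix (2 * y) N'
            else true :: binary_prefix (2 * y - 1) N'
  end.

Definition segment0 (e : R) (z : R) : Prop := 0 <= z <= e.

Definition avoids (S : R -> Prop) (a s : R) : Prop := forall z, a <= z <= a + s -> ~ S z.

Lemma in_cell_unit w : forall y, in_cell w y -> 0 < y < 1.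
Proof.
  induction w as [|b w IH]; simpl; intros y H; auto.
  apply IH in H. destruct b; lra.
Qed.

Lemma in_cell_nonempty w : exists y, in_cell w y.
Proof.
  induction w as [|b w [y Hy]]; simpl.
  - exists (1/2). lra.
  - exists ((y + (if b then 1 else 0)) / 2).
    replace (2 * ((y + (if b then 1 else 0)) / 2) - (if b then 1 else 0)) with y by lra.
    exact Hy.
Qed.

Lemma binary_prefix_cell N : forall y w, 0 <= y < 1 ->
  exists z, in_cell (binary_prefix y N ++ w) z /\ Rabs (z - y) <= (/2) ^ N.
Proof.
  induction N as [|N IH]; intros y w Hy; simpl.
  - destruct (in_cell_nonempty w) as [z Hz]. exists z. split; auto.
    apply in_cell_unit in Hz. apply Rabs_le. lra.
  - destruct (Rlt_dec y (1/2)).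
    + destruct (IH (2 * y) w) as [z [Hz Hd]]; [lra|].
      exists (z / 2). simpl. replace (2 * (z / 2) - 0) with z by lra.
      apply Rabs_le_between in Hd. split; auto. apply Rabs_le. lra.
    + destruct (IH (2 * y - 1) w) as [z [Hz Hd]]; [lra|].
      exists ((z + 1) / 2). simpl. replace (2 * ((z + 1) / 2) - 1) with z by lra.
      apply Rabs_le_between in Hd. split; auto. apply Rabs_le. lra.
Qed.

Lemma word_proj_mono (S S' : R -> Prop) w : (forall z, S z -> S' z) ->
  forall z, word_proj S w z -> word_proj S' w z.
Proof.
  intros HS. induction w as [|b w IH]; simpl; auto.
  intros z [z' [t [H1 H2]]]. exists z', t. auto.
Qed.

Lemma word_proj_segment_mono e e' w z : e <= e' ->
  word_proj (segment0 e) w z -> word_proj (segment0 e') w z.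
Proof. intros He. apply word_proj_mono. unfold segment0. intros x Hx. lra. Qed.

Lemma word_proj_app (S S' : R -> Prop) w1 w2 : (forall z, word_proj S w2 z -> S' z) ->
  forall z, word_proj S (w1 ++ w2) z -> word_proj S' w1 z.
Proof.
  intros HS. induction w1 as [|b w IH]; simpl; auto.
  intros z [z' [t [H1 H2]]]. exists z', t. auto.
Qed.

Lemma word_proj_ones L z :
  word_proj (segment0 1) (repeat true L) z -> segment0 ((/2) ^ L) z.
Proof.
  revert z. unfold segment0. induction L as [|L IH]; simpl; intros z H; [lra|].
  destruct H as [z' [t [H1 [-> ->]]]]. apply IH in H1. lra.
Qed.

Lemma K_in_word_proj (K : pt -> Prop) : compact2 K -> ifs_invariant K ->
  forall w p, K p -> in_cell w (snd p) -> word_proj (segment0 1) w (fst p).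
Proof.
  intros HC HI. induction w as [|b w IH]; simpl; intros p Hp Hc.
  - apply (K_in_unit_square K HC HI p Hp).
  - pose proof (in_cell_unit _ _ Hc) as H01.
    apply HI in Hp.
    destruct Hp as [[q [Hq ->]] | [[q [Hq ->]] | [k [n [Hn [q [Hq ->]]]]]]];
      simpl in *; pose proof (K_in_unit_square K HC HI q Hq) as Hu.
    + destruct b; [|lra]. exists (fst q), 0. split; [|split; auto; lra].
      apply IH; auto. replace (snd q) with (2 * ((snd q + 1) / 2) - 1) by lra. exact Hc.
    + destruct b; [lra|]. exists (fst q), 0. split; [|split; [left; auto|lra]].
      apply IH; auto. replace (snd q) with (2 * (snd q / 2) - 0) by lra. exact Hc.
    + destruct b; [lra|]. exists (fst q), (t_kn k n). split; [|split; [right; eauto|lra]].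
      apply IH; auto. replace (snd q) with (2 * (snd q / 2) - 0) by lra. exact Hc.
Qed.

Definition avoidable (w : list bool) : Prop :=
  forall a s, 0 < s -> exists a' s' e, 0 < s' /\ 0 < e /\ a <= a' /\ a' + s' <= a + s /\
    avoids (word_proj (segment0 e) w) a' s'.

Lemma avoidable_nil : avoidable [].
Proof.
  intros a s Hs. simpl. destruct (Rlt_dec 0 (a + s / 2)).
  - exists (a + s / 2), (s / 4), ((a + s / 2) / 2). repeat split; try lra.
    unfold segment0. intros z Hz Hb. lra.
  - exists a, (s / 4), 1. repeat split; try lra.
    unfold segment0. intros z Hz Hb. lra.
Qed.

Lemma avoidable_cons_true w : avoidable w -> avoidable (true :: w).
Proof.
  intros IH a s Hs.
  destruct (IH (2 * a) (2 * s)) as [a' [s' [e [Hs' [He [L1 [L2 Hav]]]]]]]; [lra|].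
  exists (a' / 2), (s' / 2), e. repeat split; try lra.
  intros z Hz [z' [t [H1 [-> ->]]]]. apply (Hav z'); [lra|auto].
Qed.

Lemma avoidable_finite_shifts w : avoidable w ->
  forall M a s, 0 < s -> exists a' s' e, 0 < s' /\ 0 < e /\ a <= a' /\ a' + s' <= a + s /\
    forall z m, a' <= z <= a' + s' -> (1 <= m <= M)%nat ->
      ~ word_proj (segment0 e) w (z - / INR m).
Proof.
  intros IH. induction M as [|M IHM]; intros a s Hs.
  - exists a, s, 1. repeat split; try lra. intros z m _ Hm. lia.
  - destruct (IHM a s Hs) as [a1 [s1 [e1 [Hs1 [He1 [L1 [L2 Hav1]]]]]]].
    set (t := / INR (S M)).
    destruct (IH (a1 - t) s1 Hs1) as [a2 [s2 [e2 [Hs2 [He2 [L3 [L4 Hav2]]]]]]].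
    exists (a2 + t), s2, (Rmin e1 e2). repeat split; try lra.
    { apply Rmin_glb_lt; auto. }
    intros z m Hz Hm Hw. destruct (Nat.eq_dec m (S M)) as [->|Hne].
    + apply (Hav2 (z - t)); [lra|].
      revert Hw. apply word_proj_segment_mono, Rmin_r.
    + apply (Hav1 z m); [lra|lia|].
      revert Hw. apply word_proj_segment_mono, Rmin_l.
Qed.

(* Shifts below [s0 / 4] are absorbed by the zero shift; the finitely many
   larger shifts [/ m] are avoided one after the other. *)
Lemma avoidable_cons_false w : avoidable w -> avoidable (false :: w).
Proof.
  intros IH a s Hs.
  destruct (IH (2 * a) (2 * s)) as [a0 [s0 [e0 [Hs0 [He0 [L1 [L2 Hav0]]]]]]]; [lra|].
  destruct (archimed_cor1 (s0 / 4)) as [M [HM HM0]]; [lra|].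
  destruct (avoidable_finite_shifts w IH M (a0 + s0 / 4) (s0 / 4)) as
      [a2 [s2 [e2 [Hs2 [He2 [L3 [L4 Hav2]]]]]]]; [lra|].
  exists (a2 / 2), (s2 / 2), (Rmin e0 e2). repeat split; try lra.
  { apply Rmin_glb_lt; auto. }
  intros z Hz [z' [t [Hw [Ht ->]]]].
  assert (Hw0 : word_proj (segment0 e0) w z') by (revert Hw; apply word_proj_segment_mono, Rmin_l).
  destruct Ht as [-> | [k [n [Hn ->]]]]; [apply (Hav0 z'); [lra|auto]|].
  rewrite t_kn_inv_nat in *. set (m := (2 ^ k * n)%nat) in *.
  assert (Hm1 : (1 <= m)%nat) by (unfold m; pose proof (Nat.pow_nonzero 2 k); lia).
  assert (Hm0 : 0 < INR m) by (apply lt_0_INR; lia).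
  destruct (le_lt_dec m M) as [HmM | HmM].
  - apply (Hav2 (z' + / INR m) m); [lra|lia|].
    replace (z' + / INR m - / INR m) with z' by ring.
    revert Hw. apply word_proj_segment_mono, Rmin_r.
  - assert (/ INR m < / INR M).
    { apply Rinv_lt_contravar; [apply Rmult_lt_0_compat; auto; apply lt_0_INR; lia|].
      apply lt_INR. exact HmM. }
    pose proof (Rinv_0_lt_compat _ Hm0).
    apply (Hav0 z'); [lra|auto].
Qed.

Lemma avoidable_all w : avoidable w.
Proof.
  induction w as [|[|] w IH].
  - apply avoidable_nil.
  - apply avoidable_cons_true, IH.
  - apply avoidable_cons_false, IH.
Qed.

Lemma K_empty_interior (K : pt -> Prop) : compact2 K -> ifs_invariant K -> empty_interior2 K.
Proof.
  intros HC HI [p [r [Hr HQ]]].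
  assert (Kp : K p) by (apply HQ; rewrite Rminus_diag, Rabs_R0; lra).
  pose proof (K_in_unit_square K HC HI p Kp) as [_ Hy].
  set (r' := Rmin r 1 / 4).
  assert (Hr' : 0 < r' <= r / 4 /\ r' <= 1 / 4).
  { unfold r'. pose proof (Rmin_l r 1). pose proof (Rmin_r r 1).
    split; [split|]; try lra. apply Rdiv_lt_0_compat; [apply Rmin_glb_lt|]; lra. }
  set (y1 := if Rlt_dec (snd p) (1/2) then snd p + r' else snd p - r').
  assert (Hy1 : 0 <= y1 < 1 /\ Rabs (y1 - snd p) <= r / 4).
  { unfold y1. destruct (Rlt_dec (snd p) (1/2)); split; try lra; apply Rabs_le; lra. }
  destruct (half_pow_lt_of_pos (r / 4)) as [N HN]; [lra|].
  destruct (avoidable_all (binary_prefix y1 N) (fst p - r / 4) (r / 2))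
    as [a' [s' [e [Hs' [He [L1 [L2 Hav]]]]]]]; [lra|].
  destruct (half_pow_lt_of_pos e He) as [L HL].
  destruct (binary_prefix_cell N y1 (repeat true L)) as [z [Hz Hzd]]; [lra|].
  assert (Kq : K (a', z)).
  { apply HQ; simpl; apply Rabs_lt_between; apply Rabs_le_between in Hzd;
      destruct Hy1 as [_ Hy1]; apply Rabs_le_between in Hy1; lra. }
  apply (Hav a'); [lra|].
  apply (word_proj_app (segment0 1) (segment0 e) _ (repeat true L)).
  - intros x Hx. apply word_proj_ones in Hx. unfold segment0 in *. lra.
  - apply (K_in_word_proj K HC HI _ (a', z) Kq Hz).
Qed.

(** * Intervals in horizontal fibres *)

Definition digit (z : R) : R := if Rlt_dec z (1/2) then 0 else 1.
Definition doubling (z : R) : R := if Rlt_dec z (1/2) then 2 * z else 2 * z - 1.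
Definition next_budget (b : nat) (z : R) : nat :=
  if Rlt_dec z (1/2) then (2 * b - 2)%nat else (b - 1)%nat.

(* Following the binary digits of the height [z], a budget [b] means that the
   remaining horizontal offset is at most [2^-b]; the greedy strategy below
   breaks down once the budget falls to [4]. *)
Fixpoint fails (b N : nat) (z : R) : Prop :=
  (b <= 4)%nat \/
  match N with
  | O => False
  | S N' => fails (next_budget b z) N' (doubling z)
  end.

Definition greedy_index (rho : R) : nat := Z.to_nat (up (/ (2 * rho))).
Definition greedy_shift (z rho : R) : R :=
  if Rlt_dec z (1/2) then (if Rlt_dec 0 rho then / INR (greedy_index rho) else 0) else 0.

Record greedy_state := GState { budget : nat; height : R; residue : R }.

Definition greedy_step (s : greedy_state) : greedy_state :=
  GState (next_budget (budget s) (height s)) (doubling (height s))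
         (2 * residue s - greedy_shift (height s) (residue s)).

Definition greedy_inv (s : greedy_state) : Prop :=
  0 <= height s < 1 /\ 0 <= residue s <= (/2) ^ budget s /\
  forall N, ~ fails (budget s) N (height s).

Lemma greedy_index_spec rho : 0 < rho ->
  (1 <= greedy_index rho)%nat /\
  / (2 * rho) < INR (greedy_index rho) <= / (2 * rho) + 1.
Proof.
  intros Hr. unfold greedy_index. destruct (archimed (/ (2 * rho))) as [A1 A2].
  assert (0 < / (2 * rho)) by (apply Rinv_0_lt_compat; lra).
  assert (Hup : (1 <= up (/ (2 * rho)))%Z).
  { assert (0 < up (/ (2 * rho)))%Z by (apply lt_IZR; simpl; lra). lia. }
  rewrite INR_IZR_INZ, Z2Nat.id by lia. split; [lia|lra].
Qed.

Lemma K_greedy_map (K : pt -> Prop) z rho q : ifs_invariant K -> K q ->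
  K ((fst q + greedy_shift z rho) / 2, (snd q + digit z) / 2).
Proof.
  intros HI Hq. apply HI. unfold greedy_shift, digit.
  destruct (Rlt_dec z (1/2)); [destruct (Rlt_dec 0 rho) as [Hrho|Hrho]|].
  - right; right. exists 0%nat, (greedy_index rho).
    split; [apply (greedy_index_spec rho Hrho)|]. exists q. split; auto.
    unfold Dkn, t_kn. simpl. rewrite Rmult_1_l, Rplus_0_r. reflexivity.
  - right; left. exists q. split; auto. unfold D0. f_equal; lra.
  - left. exists q. split; auto. unfold U. f_equal; lra.
Qed.

(* With [m = greedy_index rho] we have [2 rho - 1/m <= 2 rho / m <= 4 rho^2]. *)
Lemma greedy_residue_bound rho : 0 < rho ->
  0 <= 2 * rho - / INR (greedy_index rho) <= 4 * (rho * rho).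
Proof.
  intros Hr. destruct (greedy_index_spec rho Hr) as [_ [M1 M2]].
  set (m := INR (greedy_index rho)) in *.
  assert (Hw : 0 < / (2 * rho)) by (apply Rinv_0_lt_compat; lra).
  assert (Hm : 0 < m) by lra.
  assert (H1 : 1 < 2 * rho * m).
  { apply (Rmult_lt_compat_l (2 * rho)) in M1; [|lra].
    rewrite Rinv_r in M1; lra. }
  assert (H2 : 2 * rho * m <= 1 + 2 * rho).
  { apply (Rmult_le_compat_l (2 * rho)) in M2; [|lra].
    rewrite Rmult_plus_distr_l, Rinv_r in M2; lra. }
  replace (2 * rho - / m) with ((2 * rho * m - 1) / m) by (field; lra).
  split.
  - apply Rdiv_le_0_compat; lra.
  - apply (Rmult_le_reg_r m); [lra|]. unfold Rdiv.
    rewrite Rmult_assoc, Rinv_l by lra. nra.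
Qed.

Lemma greedy_step_inv s : greedy_inv s -> greedy_inv (greedy_step s).
Proof.
  destruct s as [b z rho]. unfold greedy_inv, greedy_step. simpl.
  intros [Hz [Hr Hf]].
  assert (Hb : (5 <= b)%nat).
  { destruct (le_lt_dec b 4); [|lia]. exfalso. apply (Hf O). simpl. auto. }
  unfold doubling, next_budget, greedy_shift.
  destruct (Rlt_dec z (1/2)) as [Hlt|Hge]; (split; [lra|split]).
  - destruct (Rlt_dec 0 rho) as [Hrho|Hrho].
    + pose proof (greedy_residue_bound rho Hrho).
      rewrite half_pow_double_sub2 by lia. pose proof (half_pow_pos b). nra.
    + pose proof (half_pow_pos (2 * b - 2)). assert (rho = 0) by lra. subst. lra.
  - intros N HF. apply (Hf (S N)). right. simpl.
    unfold next_budget, doubling. destruct (Rlt_dec z (1/2)); [exact HF|contradiction].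
  - replace b with (S (b - 1)) in Hr by lia. simpl in Hr. lra.
  - intros N HF. apply (Hf (S N)). right. simpl.
    unfold next_budget, doubling. destruct (Rlt_dec z (1/2)); [contradiction|exact HF].
Qed.

Lemma greedy_orbit_inv s n : greedy_inv s -> greedy_inv (Nat.iter n greedy_step s).
Proof. intros H. induction n; simpl; auto. apply greedy_step_inv, IHn. Qed.

(* [(x, y)] is the image of [(residue s, height s)], for the [n]-th state [s],
   under the composite of the [n] maps chosen so far; [greedy_approx] is the
   image of [q] under the same composite. *)
Definition greedy_approx (x y : R) (s : greedy_state) (n : nat) (q : pt) : pt :=
  (x - (/2) ^ n * residue s + (/2) ^ n * fst q, y - (/2) ^ n * height s + (/2) ^ n * snd q).

Lemma K_greedy_approx (K : pt -> Prop) B x y : ifs_invariant K ->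
  forall n q, K q -> K (greedy_approx x y (Nat.iter n greedy_step (GState B y x)) n q).
Proof.
  intros HI. induction n as [|n IH]; intros q Hq.
  - unfold greedy_approx. simpl. rewrite !Rmult_1_l.
    replace (x - x + fst q) with (fst q) by ring.
    replace (y - y + snd q) with (snd q) by ring. destruct q; exact Hq.
  - set (s := Nat.iter n greedy_step (GState B y x)).
    specialize (IH _ (K_greedy_map K (height s) (residue s) q HI Hq)). fold s in IH.
    replace (greedy_approx x y (Nat.iter (S n) greedy_step (GState B y x)) (S n) q)
      with (greedy_approx x y s n ((fst q + greedy_shift (height s) (residue s)) / 2,
                                   (snd q + digit (height s)) / 2)); auto.
    unfold greedy_approx. simpl. fold s. unfold doubling, digit.
    destruct (Rlt_dec (height s) (1/2)); f_equal; field.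
Qed.

Lemma segment_in_fibre (K : pt -> Prop) : nonempty2 K -> compact2 K -> ifs_invariant K ->
  forall B y, 0 <= y < 1 -> (forall N, ~ fails B N y) ->
  forall x, 0 <= x <= (/2) ^ B -> K (x, y).
Proof.
  intros [q Hq] HC HI B y Hy Hf x Hx.
  pose proof (K_in_unit_square K HC HI q Hq) as Hu.
  assert (Hinv := greedy_orbit_inv (GState B y x)).
  destruct HC as [Hcl _].
  apply (Hcl (fun n => greedy_approx x y (Nat.iter n greedy_step (GState B y x)) n q)).
  - intros n. apply K_greedy_approx; auto.
  - apply (Un_cv_ext (fun n => x + (/2) ^ n *
             (fst q - residue (Nat.iter n greedy_step (GState B y x))))).
    { intros n. simpl. ring. }
    apply (Un_cv_add_half_pow x 2). intros n.
    destruct (Hinv n (conj Hy (conj Hx Hf))) as [_ [Hr _]].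
    pose proof (half_pow_le1 (budget (Nat.iter n greedy_step (GState B y x)))).
    apply Rabs_le. lra.
  - apply (Un_cv_ext (fun n => y + (/2) ^ n *
             (snd q - height (Nat.iter n greedy_step (GState B y x))))).
    { intros n. simpl. ring. }
    apply (Un_cv_add_half_pow y 2). intros n.
    destruct (Hinv n (conj Hy (conj Hx Hf))) as [Hz _].
    apply Rabs_le. lra.
Qed.

(** * The failure set has small measure *)

(* The dyadic cells of [[lo, lo + len]] (of depth [n]) on which the budget,
   started at [b], first drops to at most [4] after exactly [n] digits. *)
Fixpoint fail_cells (b n : nat) (lo len : R) : list (R * R) :=
  if Nat.leb b 4 then match n with O => [(lo, lo + len)] | _ => [] end
  else match n with
       | O => []
       | S n' => fail_cells (2 * b - 2) n' lo (len / 2) ++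
                 fail_cells (b - 1) n' (lo + len / 2) (len / 2)
       end.

Fixpoint fail_mass (n b : nat) : R :=
  if Nat.leb b 4 then match n with O => 1 | _ => 0 end
  else match n with
       | O => 0
       | S n' => (fail_mass n' (2 * b - 2) + fail_mass n' (b - 1)) / 2
       end.

Definition total_length (l : list (R * R)) : R :=
  fold_right (fun p acc => (snd p - fst p) + acc) 0 l.

Definition well_ordered (l : list (R * R)) : Prop := forall p, In p l -> fst p <= snd p.

Lemma total_length_app l1 l2 : total_length (l1 ++ l2) = total_length l1 + total_length l2.
Proof. induction l1 as [|p l1 IH]; simpl; [ring|]. rewrite IH. ring. Qed.

Lemma total_length_nonneg l : well_ordered l -> 0 <= total_length l.
Proof.
  unfold well_ordered. induction l as [|p l IH]; simpl; intros H; [lra|].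
  assert (fst p <= snd p) by auto. assert (0 <= total_length l) by auto. lra.
Qed.

Lemma fail_cells_total n : forall b lo len,
  total_length (fail_cells b n lo len) = len * fail_mass n b.
Proof.
  induction n as [|n IH]; intros b lo len; simpl; destruct (Nat.leb b 4); simpl; try ring.
  rewrite total_length_app, !IH. field.
Qed.

Lemma fail_cells_well_ordered n : forall b lo len, 0 <= len ->
  well_ordered (fail_cells b n lo len).
Proof.
  unfold well_ordered.
  induction n as [|n IH]; intros b lo len Hl p Hp; simpl in Hp; destruct (Nat.leb b 4);
    simpl in Hp; try tauto.
  - destruct Hp as [<-|[]]. simpl. lra.
  - apply in_app_or in Hp. destruct Hp as [Hp|Hp]; (eapply IH; [|exact Hp]); lra.
Qed.

Lemma fail_cells_cover N : forall b z lo len, 0 < len -> 0 <= z < 1 -> fails b N z ->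
  exists n, (n <= N)%nat /\
    exists p, In p (fail_cells b n lo len) /\ fst p <= lo + len * z <= snd p.
Proof.
  induction N as [|N IH]; intros b z lo len Hl Hz HF;
    destruct (le_lt_dec b 4) as [Hb|Hb].
  - exists O. split; [lia|]. exists (lo, lo + len). simpl.
    apply Nat.leb_le in Hb. rewrite Hb. simpl. split; auto. nra.
  - simpl in HF. lia.
  - exists O. split; [lia|]. exists (lo, lo + len). simpl.
    apply Nat.leb_le in Hb. rewrite Hb. simpl. split; auto. nra.
  - destruct HF as [Hb'|HF]; [lia|].
    assert (Hbf : Nat.leb b 4 = false) by (apply Nat.leb_gt; auto).
    unfold next_budget, doubling in HF. destruct (Rlt_dec z (1/2)) as [Hlt|Hge].
    + destruct (IH (2 * b - 2)%nat (2 * z) lo (len / 2)) as [n [Hn [p [Hp Hc]]]]; auto; try lra.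
      exists (S n). split; [lia|]. exists p. simpl. rewrite Hbf. split.
      * apply in_or_app; auto.
      * replace (lo + len * z) with (lo + len / 2 * (2 * z)) by field. exact Hc.
    + destruct (IH (b - 1)%nat (2 * z - 1) (lo + len / 2) (len / 2)) as [n [Hn [p [Hp Hc]]]];
        auto; try lra.
      exists (S n). split; [lia|]. exists p. simpl. rewrite Hbf. split.
      * apply in_or_app; auto.
      * replace (lo + len * z) with (lo + len / 2 + len / 2 * (2 * z - 1)) by field.
        exact Hc.
Qed.

Lemma fail_mass_sum_small_budget N b : (b <= 4)%nat -> sum_f_R0 (fun n => fail_mass n b) N = 1.
Proof.
  intros Hb. apply Nat.leb_le in Hb.
  induction N as [|N IH]; simpl; rewrite Hb; [reflexivity|].
  rewrite IH. ring.
Qed.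

Lemma fail_mass_sum_shift N b : (5 <= b)%nat ->
  sum_f_R0 (fun n => fail_mass (S n) b) N =
  (sum_f_R0 (fun n => fail_mass n (2 * b - 2)) N + sum_f_R0 (fun n => fail_mass n (b - 1)) N) / 2.
Proof.
  intros Hb.
  assert (Hstep : forall n, fail_mass (S n) b = (fail_mass n (2 * b - 2) + fail_mass n (b - 1)) / 2).
  { intros n. simpl. replace (Nat.leb b 4) with false; [reflexivity|].
    symmetry. apply Nat.leb_gt. lia. }
  induction N as [|N IH]; cbn [sum_f_R0]; rewrite Hstep; [reflexivity|].
  rewrite IH. field.
Qed.

(* The contraction factor [9/10] works because [c^(2k+4) + c^k <= 2 c^(k+1)]
   for [c = 9/10]: the digit 0 squares the budget's decay, the digit 1 loses one. *)
Lemma nine_tenths_ineq k : (9/10) ^ (2 * k + 4) + (9/10) ^ k <= 2 * (9/10) ^ (k + 1).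
Proof.
  replace (2 * k + 4)%nat with (k + (4 + k))%nat by lia.
  rewrite (pow_add _ k (4 + k)), (pow_add _ 4 k), (pow_add _ k 1).
  assert (Hk1 : (9/10) ^ k <= 1) by (rewrite <- (pow1 k); apply pow_incr; lra).
  assert (Hk0 : 0 <= (9/10) ^ k) by (apply pow_le; lra).
  simpl. nra.
Qed.

Lemma fail_mass_sum_bound N : forall b, sum_f_R0 (fun n => fail_mass n b) N <= (9/10) ^ (b - 4).
Proof.
  induction N as [|N IH]; intros b; destruct (le_lt_dec b 4) as [Hb|Hb].
  - rewrite fail_mass_sum_small_budget by auto. replace (b - 4)%nat with O by lia. simpl. lra.
  - simpl. replace (Nat.leb b 4) with false by (symmetry; apply Nat.leb_gt; auto).
    apply pow_le. lra.
  - rewrite fail_mass_sum_small_budget by auto. replace (b - 4)%nat with O by lia. simpl. lra.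
  - rewrite decomp_sum by lia. simpl pred. rewrite fail_mass_sum_shift by lia.
    replace (fail_mass 0 b) with 0
      by (simpl; replace (Nat.leb b 4) with false; auto; symmetry; apply Nat.leb_gt; auto).
    pose proof (IH (2 * b - 2)%nat). pose proof (IH (b - 1)%nat).
    pose proof (nine_tenths_ineq (b - 5)).
    replace (2 * b - 2 - 4)%nat with (2 * (b - 5) + 4)%nat in * by lia.
    replace (b - 1 - 4)%nat with (b - 5)%nat in * by lia.
    replace (b - 4)%nat with (b - 5 + 1)%nat by lia. lra.
Qed.

Lemma sum_nth_le_total_length l : well_ordered l ->
  forall N, sum_f_R0 (fun i => snd (nth i l (0, 0)) - fst (nth i l (0, 0))) N <= total_length l.
Proof.
  unfold well_ordered. induction l as [|p l IH]; intros H N.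
  - rewrite (sum_eq _ (fun _ => 0)) by (intros [|i] _; simpl; ring).
    rewrite sum_cte. simpl. lra.
  - assert (Hl : forall q, In q l -> fst q <= snd q) by (intros; apply H; simpl; auto).
    assert (fst p <= snd p) by (apply H; simpl; auto).
    pose proof (total_length_nonneg l Hl).
    change (total_length (p :: l)) with (snd p - fst p + total_length l).
    destruct N as [|N]; [simpl; lra|].
    rewrite decomp_sum by lia. specialize (IH Hl N). cbn [nth pred]. lra.
Qed.

(* Reading the [i]-th entry of the [i]-th list enumerates all entries of a
   growing family of lists, provided the [N]-th list has more than [N] entries. *)
Lemma seq_of_growing_lists (L : nat -> list (R * R)) (C : R) :
  (forall N, exists l, L (S N) = L N ++ l) ->
  (forall N, (N < length (L N))%nat) ->
  (forall N, well_ordered (L N)) ->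
  (forall N, total_length (L N) <= C) ->
  exists a b : nat -> R, (forall i, a i <= b i) /\
    (forall N p, In p (L N) -> exists i, a i = fst p /\ b i = snd p) /\
    (forall N, sum_f_R0 (fun i => b i - a i) N <= C).
Proof.
  intros Hgrow Hlen Hwf Htot.
  assert (Hprefix : forall N M, (N <= M)%nat -> exists l, L M = L N ++ l).
  { intros N M HNM. induction HNM as [|M HNM [l1 E1]].
    - exists []. rewrite app_nil_r. reflexivity.
    - destruct (Hgrow M) as [l2 E2]. exists (l1 ++ l2). rewrite E2, E1, app_assoc. reflexivity. }
  assert (Hstable : forall k N, (k <= N)%nat -> nth k (L k) (0, 0) = nth k (L N) (0, 0)).
  { intros k N HkN. destruct (Hprefix k N HkN) as [l ->]. rewrite app_nth1; auto. }
  exists (fun i => fst (nth i (L i) (0, 0))), (fun i => snd (nth i (L i) (0, 0))).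
  split; [|split].
  - intros i. apply (Hwf i), nth_In, Hlen.
  - intros N p Hp. destruct (In_nth _ _ (0, 0) Hp) as [k [Hk Hkp]].
    exists k. enough (nth k (L k) (0, 0) = p) as -> by auto.
    destruct (le_lt_dec k N) as [HkN|HkN].
    + rewrite (Hstable k N HkN). exact Hkp.
    + destruct (Hprefix N k (Nat.lt_le_incl _ _ HkN)) as [l ->]. rewrite app_nth1; auto.
  - intros N. apply Rle_trans with
      (sum_f_R0 (fun i => snd (nth i (L N) (0, 0)) - fst (nth i (L N) (0, 0))) N).
    + apply Req_le, sum_eq. intros i Hi. rewrite (Hstable i N Hi). reflexivity.
    + apply Rle_trans with (total_length (L N)); auto. apply sum_nth_le_total_length, Hwf.
Qed.

(* [(1, 1)] covers the height [1]; the dummy [(0, 0)] added at every level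
   makes the [N]-th list longer than [N]. *)
Fixpoint fail_cells_upto (B N : nat) : list (R * R) :=
  match N with
  | O => (1, 1) :: (fail_cells B 0 0 1 ++ [(0, 0)])
  | S N' => fail_cells_upto B N' ++ (fail_cells B (S N') 0 1 ++ [(0, 0)])
  end.

Lemma fail_cells_upto_total B N :
  total_length (fail_cells_upto B N) = sum_f_R0 (fun n => fail_mass n B) N.
Proof.
  induction N as [|N IH]; cbn [fail_cells_upto sum_f_R0].
  - change (total_length ((1, 1) :: ?l)) with (1 - 1 + total_length l).
    rewrite total_length_app, fail_cells_total. simpl. ring.
  - rewrite !total_length_app, IH, fail_cells_total. simpl. ring.
Qed.

Lemma fail_cells_upto_length B N : (N < length (fail_cells_upto B N))%nat.
Proof. induction N; simpl; [lia|]. rewrite !length_app. simpl. lia. Qed.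

Lemma fail_cells_upto_well_ordered B N : well_ordered (fail_cells_upto B N).
Proof.
  assert (Hlevel : forall n, well_ordered (fail_cells B n 0 1 ++ [(0, 0)])).
  { intros n p Hp. apply in_app_or in Hp. destruct Hp as [Hp|[<-|[]]].
    - apply (fail_cells_well_ordered n B 0 1); [lra|exact Hp].
    - simpl. lra. }
  induction N as [|N IH]; cbn [fail_cells_upto]; intros p Hp.
  - destruct Hp as [<-|Hp]; [simpl; lra|]. apply (Hlevel 0%nat p Hp).
  - apply in_app_or in Hp. destruct Hp as [Hp|Hp]; [apply IH|apply (Hlevel (S N))]; exact Hp.
Qed.

Lemma fail_cells_in_upto B n N p : (n <= N)%nat ->
  In p (fail_cells B n 0 1) -> In p (fail_cells_upto B N).
Proof.
  intros HnN Hp. induction HnN as [|N HnN IH].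
  - destruct n; cbn [fail_cells_upto].
    + right. apply in_or_app. auto.
    + apply in_or_app. right. apply in_or_app. auto.
  - cbn [fail_cells_upto]. apply in_or_app. auto.
Qed.

Lemma fail_set_cover B : exists a b : nat -> R, (forall i, a i <= b i) /\
  (forall y, 0 <= y <= 1 -> (y = 1 \/ (y < 1 /\ exists N, fails B N y)) ->
     exists i, a i <= y <= b i) /\
  (forall N, sum_f_R0 (fun i => b i - a i) N <= (9/10) ^ (B - 4)).
Proof.
  destruct (seq_of_growing_lists (fail_cells_upto B) ((9/10) ^ (B - 4)))
    as [a [b [Hab [Hin Hsum]]]].
  - intros N. eexists. reflexivity.
  - apply fail_cells_upto_length.
  - apply fail_cells_upto_well_ordered.
  - intros N. rewrite fail_cells_upto_total. apply fail_mass_sum_bound.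
  - exists a, b. split; [exact Hab|split; [|exact Hsum]].
    intros y Hy [-> | [Hy1 [N HF]]].
    + destruct (Hin O (1, 1)) as [i [Ea Eb]]; [left; reflexivity|].
      exists i. rewrite Ea, Eb. simpl. lra.
    + destruct (fail_cells_cover N B y 0 1) as [n [Hn [p [Hp Hc]]]]; try lra; auto.
      destruct (Hin N p (fail_cells_in_upto B n N p Hn Hp)) as [i [Ea Eb]].
      exists i. rewrite Ea, Eb. lra.
Qed.

(** * A weighted covering inequality on a segment *)

Definition indicator (a b y : R) : R :=
  if Rle_dec a y then if Rle_dec y b then 1 else 0 else 0.

Lemma indicator_bounds a b y : 0 <= indicator a b y <= 1.
Proof. unfold indicator. repeat destruct Rle_dec; lra. Qed.

Lemma indicator_in a b y : a <= y <= b -> indicator a b y = 1.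
Proof. intros Hy. unfold indicator. repeat destruct Rle_dec; lra. Qed.

Lemma indicator_enlarge a b e g y y' : Rabs (y' - y) < g -> g <= e ->
  indicator a b y <= indicator (a - e) (b + e) y'.
Proof.
  intros Hy' Hg. apply Rabs_lt_between in Hy'. unfold indicator.
  repeat destruct Rle_dec; lra.
Qed.

Module Integration.
Import Coquelicot.Coquelicot.

Lemma is_RInt_indicator_le a b u v : a <= b -> u <= v ->
  exists I, is_RInt (V := R_NormedModule) (indicator a b) u v I /\ I <= b - a.
Proof.
  intros Hab Huv.
  set (a' := Rmax u (Rmin a v)). set (b' := Rmax a' (Rmin b v)).
  assert (Ha' : u <= a' <= v) by (unfold a', Rmax, Rmin; repeat destruct Rle_dec; lra).
  assert (Hb' : a' <= b' <= v) by (unfold b', Rmax, Rmin in *; repeat destruct Rle_dec; lra).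
  assert (Hpiece : forall c p q, u <= p <= q -> q <= v ->
      (forall x, p < x < q -> indicator a b x = c) ->
      is_RInt (V := R_NormedModule) (indicator a b) p q ((q - p) * c)).
  { intros c p q Hpq Hq Hc. apply (is_RInt_ext (fun _ => c)).
    - rewrite Rmin_left, Rmax_right by lra. intros x Hx. symmetry. apply Hc, Hx.
    - apply (is_RInt_const (V := R_NormedModule)). }
  exists ((a' - u) * 0 + (b' - a') * 1 + (v - b') * 0). split.
  - apply (is_RInt_Chasles (V := R_NormedModule) _ u b' v ((a' - u) * 0 + (b' - a') * 1)
             ((v - b') * 0));
      [apply (is_RInt_Chasles (V := R_NormedModule) _ u a' b' ((a' - u) * 0) ((b' - a') * 1))|];
      apply Hpiece; try lra; intros x Hx; unfold indicator;
      revert Hx; unfold b', a', Rmax, Rmin; repeat destruct Rle_dec; intros; lra.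
  - unfold b', a', Rmax, Rmin; repeat destruct Rle_dec; lra.
Qed.

(* Integrate the covering inequality over [[u, v]]. *)
Lemma finite_weighted_cover_length N (a b mu : nat -> R) u v : u <= v ->
  (forall k, a k <= b k) -> (forall k, 0 <= mu k) ->
  (forall y, u <= y <= v -> 1 <= sum_f_R0 (fun k => mu k * indicator (a k) (b k) y) N) ->
  v - u <= sum_f_R0 (fun k => mu k * (b k - a k)) N.
Proof.
  intros Huv Hab Hmu Hcov.
  assert (Hsum : forall M, exists J,
    is_RInt (V := R_NormedModule) (fun y => sum_f_R0 (fun k => mu k * indicator (a k) (b k) y) M) u v J
    /\ J <= sum_f_R0 (fun k => mu k * (b k - a k)) M).
  { induction M as [|M [J [HJ HJle]]];
      [|destruct (is_RInt_indicator_le (a (S M)) (b (S M)) u v) as [I [HI HIle]]; auto];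
      [destruct (is_RInt_indicator_le (a 0%nat) (b 0%nat) u v) as [I [HI HIle]]; auto|].
    - exists (mu 0%nat * I). split; [apply (is_RInt_scal _ _ _ _ _ HI)|].
      simpl. apply Rmult_le_compat_l; auto.
    - exists (J + mu (S M) * I). split.
      + apply (is_RInt_plus _ _ _ _ _ _ HJ (is_RInt_scal _ _ _ _ _ HI)).
      + simpl. pose proof (Rmult_le_compat_l (mu (S M)) _ _ (Hmu (S M)) HIle). lra. }
  destruct (Hsum N) as [J [HJ HJle]].
  enough (v - u <= J) by lra.
  replace (v - u) with ((v - u) * 1) by ring.
  apply (is_RInt_le (fun _ => 1) (fun y => sum_f_R0 (fun k => mu k * indicator (a k) (b k) y) N) u v);
    auto.
  - apply (is_RInt_const (V := R_NormedModule)).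
  - intros x Hx. apply Hcov. lra.
Qed.

End Integration.

(* A Heine-Borel argument for an increasing family of properties. *)
Lemma uniform_index_on_segment (P : nat -> R -> Prop) u v :
  (forall N N' y, (N <= N')%nat -> P N y -> P N' y) -> u <= v ->
  (forall y, u <= y <= v -> exists N g, 0 < g /\ forall y', Rabs (y' - y) < g -> P N y') ->
  exists N, forall y, u <= y <= v -> P N y.
Proof.
  intros Hmono Huv Hloc.
  set (E := fun t => u <= t <= v /\ exists N, forall y, u <= y <= t -> P N y).
  assert (HEu : E u).
  { split; [lra|]. destruct (Hloc u) as [N [g [Hg HP]]]; [lra|].
    exists N. intros y Hy. apply HP. replace (y - u) with 0 by lra. rewrite Rabs_R0. exact Hg. }
  destruct (completeness E) as [s [Hub Hlub]]; [exists v; intros t [Ht _]; lra|eauto|].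
  assert (Hs : u <= s <= v) by (split; [apply Hub, HEu|apply Hlub; intros t [Ht _]; lra]).
  destruct (Hloc s Hs) as [Ns [g [Hg HPs]]].
  assert (Hnear : exists t, E t /\ s - g < t).
  { apply NNPP. intros Hn. enough (s <= s - g) by lra. apply Hlub.
    intros t Et. apply Rnot_lt_le. intros Hlt. apply Hn. exists t. auto. }
  destruct Hnear as [t [[Ht [Nt HPt]] Hst]].
  set (t2 := Rmin v (s + g / 2)).
  assert (E2 : E t2).
  { split; [unfold t2, Rmin; destruct Rle_dec; lra|].
    exists (max Nt Ns). intros y Hy. destruct (Rle_dec y t).
    - apply Hmono with Nt; [lia|]. apply HPt. lra.
    - apply Hmono with Ns; [lia|]. apply HPs, Rabs_lt_between.
      assert (y <= s + g / 2) by (unfold t2 in Hy; pose proof (Rmin_r v (s + g / 2)); lra).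
      lra. }
  assert (t2 <= s) by (apply Hub, E2).
  assert (t2 = v) by (unfold t2, Rmin in *; destruct Rle_dec; lra).
  destruct E2 as [_ [N HN]]. exists N. intros y Hy. apply HN. lra.
Qed.

Lemma finite_family_lower_bound (e : nat -> R) N : (forall k, 0 < e k) ->
  exists g, 0 < g /\ forall k, (k <= N)%nat -> g <= e k.
Proof.
  intros He. induction N as [|N [g [Hg Hle]]].
  - exists (e 0%nat). split; auto. intros k Hk. replace k with 0%nat by lia. lra.
  - exists (Rmin g (e (S N))). split; [apply Rmin_glb_lt; auto|].
    intros k Hk. destruct (Nat.eq_dec k (S N)) as [->|Hne]; [apply Rmin_r|].
    apply Rle_trans with g; [apply Rmin_l|apply Hle; lia].
Qed.

(* Enlarging the intervals by positive amounts turns the pointwise covering into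
   an open one, so that a single partial sum works on the whole segment. *)
Lemma weighted_cover_enlarged (a b mu e : nat -> R) u v : u <= v ->
  (forall k, a k <= b k) -> (forall k, 0 <= mu k) -> (forall k, 0 < e k) ->
  (forall y, u <= y <= v -> exists N, 1 <= sum_f_R0 (fun k => mu k * indicator (a k) (b k) y) N) ->
  exists N, v - u <= sum_f_R0 (fun k => mu k * (b k - a k + 2 * e k)) N.
Proof.
  intros Huv Hab Hmu He Hcov.
  set (P := fun N y => 1 <= sum_f_R0 (fun k => mu k * indicator (a k - e k) (b k + e k) y) N).
  destruct (uniform_index_on_segment P u v) as [N HN]; auto.
  - intros N N' y HNN' HP. unfold P in *. eapply Rle_trans; [exact HP|].
    apply partial_sum_mono; auto. intros k.
    pose proof (Hmu k). pose proof (indicator_bounds (a k - e k) (b k + e k) y). nra.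
  - intros y Hy. destruct (Hcov y Hy) as [N HN].
    destruct (finite_family_lower_bound e N He) as [g [Hg Hge]].
    exists N, g. split; auto. intros y' Hy'. unfold P. eapply Rle_trans; [exact HN|].
    apply sum_Rle. intros k Hk. apply Rmult_le_compat_l; auto.
    apply (indicator_enlarge _ _ _ g y y'); auto.
  - exists N.
    rewrite (sum_eq _ (fun k => mu k * ((b k + e k) - (a k - e k)))) by (intros; ring).
    apply Integration.finite_weighted_cover_length; auto.
    intros k. pose proof (Hab k). pose proof (He k). lra.
Qed.

Lemma half_pow_sum_le2 N : sum_f_R0 (fun k => (/2) ^ k) N <= 2.
Proof.
  rewrite tech3 by lra. pose proof (half_pow_pos (S N)).
  apply (Rmult_le_reg_r (1 - /2)); [lra|].
  unfold Rdiv. rewrite Rmult_assoc, Rinv_l by lra. lra.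
Qed.

Lemma weighted_cover_length (a b mu : nat -> R) (u v C : R) : u <= v ->
  (forall k, a k <= b k) -> (forall k, 0 <= mu k) ->
  (forall y, u <= y <= v -> exists N, 1 <= sum_f_R0 (fun k => mu k * indicator (a k) (b k) y) N) ->
  (forall N, sum_f_R0 (fun k => mu k * (b k - a k)) N <= C) ->
  v - u <= C.
Proof.
  intros Huv Hab Hmu Hcov HC. apply Rnot_lt_le. intros Hlt.
  set (eta := (v - u - C) / 8).
  set (e := fun k => eta * (/2) ^ k / (mu k + 1)).
  assert (He : forall k, 0 < e k).
  { intros k. pose proof (Hmu k). pose proof (half_pow_pos k).
    apply Rdiv_lt_0_compat; [apply Rmult_lt_0_compat; unfold eta|]; lra. }
  assert (Hmue : forall k, mu k * e k <= eta * (/2) ^ k).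
  { intros k. pose proof (Hmu k). pose proof (half_pow_pos k).
    assert (Heta : 0 < eta * (/2) ^ k) by (apply Rmult_lt_0_compat; unfold eta; lra).
    unfold e. replace (mu k * (eta * (/2) ^ k / (mu k + 1)))
      with (eta * (/2) ^ k * (mu k / (mu k + 1))) by (field; lra).
    assert (mu k / (mu k + 1) <= 1).
    { apply (Rmult_le_reg_r (mu k + 1)); [lra|].
      unfold Rdiv. rewrite Rmult_assoc, Rinv_l by lra. lra. }
    nra. }
  destruct (weighted_cover_enlarged a b mu e u v) as [N HN]; auto.
  assert (sum_f_R0 (fun k => mu k * (b k - a k + 2 * e k)) N
          <= C + 2 * eta * sum_f_R0 (fun k => (/2) ^ k) N).
  { apply Rle_trans with (sum_f_R0 (fun k => mu k * (b k - a k) + (/2) ^ k * (2 * eta)) N).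
    - apply sum_Rle. intros k _. pose proof (Hmue k). lra.
    - rewrite sum_plus, <- scal_sum. apply Rplus_le_compat_r, HC. }
  pose proof (half_pow_sum_le2 N).
  assert (0 < eta) by (unfold eta; lra).
  assert (eta * sum_f_R0 (fun k => (/2) ^ k) N <= eta * 2) by (apply Rmult_le_compat_l; lra).
  unfold eta in *. lra.
Qed.

Definition interleave (f g : nat -> R) (i : nat) : R :=
  if Nat.even i then f (Nat.div2 i) else g (Nat.div2 i).

Lemma interleave_even f g k : interleave f g (2 * k) = f k.
Proof. unfold interleave. rewrite Nat.even_mul, Nat.div2_double. reflexivity. Qed.

Lemma interleave_odd f g k : interleave f g (S (2 * k)) = g k.
Proof.
  unfold interleave. rewrite Nat.even_succ, Nat.odd_mul, Nat.div2_succ_double. reflexivity.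
Qed.

Lemma sum_f_R0_pairs (F : nat -> R) N :
  sum_f_R0 F (S (2 * N)) = sum_f_R0 (fun k => F (2 * k)%nat + F (S (2 * k))) N.
Proof.
  induction N as [|N IH]; [simpl; ring|].
  replace (S (2 * S N)) with (S (S (S (2 * N)))) by lia.
  rewrite tech5, tech5, IH, (tech5 _ N). replace (2 * S N)%nat with (S (S (2 * N))) by lia. ring.
Qed.

(* The two families are merged into one by interleaving, intervals [[a i, b i]]
   with weight [1] at even and weighted intervals [[c k, d k]] at odd indices. *)
Lemma weighted_cover_two_families (a b c d mu : nat -> R) (u v C1 C2 : R) : u <= v ->
  (forall i, a i <= b i) -> (forall k, c k <= d k) -> (forall k, 0 <= mu k) ->
  (forall y, u <= y <= v -> (exists i, a i <= y <= b i) \/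
     exists N, 1 <= sum_f_R0 (fun k => mu k * indicator (c k) (d k) y) N) ->
  (forall N, sum_f_R0 (fun i => b i - a i) N <= C1) ->
  (forall N, sum_f_R0 (fun k => mu k * (d k - c k)) N <= C2) ->
  v - u <= C1 + C2.
Proof.
  intros Huv Hab Hcd Hmu Hcov H1 H2.
  set (al := interleave a c). set (be := interleave b d). set (w := interleave (fun _ => 1) mu).
  assert (Hw : forall i, 0 <= w i).
  { intros i. unfold w, interleave. destruct (Nat.even i); [lra|apply Hmu]. }
  assert (Halbe : forall i, al i <= be i).
  { intros i. unfold al, be, interleave. destruct (Nat.even i); auto. }
  apply (weighted_cover_length al be w); auto.
  - intros y Hy.
    assert (Hterm : forall k, 0 <= w k * indicator (al k) (be k) y).
    { intros k. pose proof (Hw k). pose proof (indicator_bounds (al k) (be k) y). nra. }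
    destruct (Hcov y Hy) as [[i Hi] | [N HN]].
    + exists (2 * i)%nat.
      eapply Rle_trans; [|apply partial_sum_ge_term with (k := (2 * i)%nat); auto].
      unfold w, al, be. rewrite !interleave_even, indicator_in by exact Hi. lra.
    + exists (S (2 * N)). rewrite sum_f_R0_pairs. eapply Rle_trans; [exact HN|].
      apply sum_Rle. intros k _. pose proof (Hterm (2 * k)%nat).
      unfold w, al, be in *. rewrite !interleave_odd. lra.
  - intros M. apply Rle_trans with (sum_f_R0 (fun i => w i * (be i - al i)) (S (2 * M))).
    { apply partial_sum_mono; [|lia]. intros i. pose proof (Hw i). pose proof (Halbe i). nra. }
    rewrite sum_f_R0_pairs.
    rewrite (sum_eq _ (fun k => (b k - a k) + mu k * (d k - c k)))
      by (intros k _; unfold w, al, be; rewrite !interleave_even, !interleave_odd; ring).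
    rewrite sum_plus. specialize (H1 M). specialize (H2 M). lra.
Qed.

Lemma segment_cover_boxes (a b c d : nat -> R) (u v y C : R) :
  u <= v -> (forall i, a i <= b i) -> C < v - u ->
  (forall x, u <= x <= v -> exists i, a i <= x <= b i /\ c i <= y <= d i) ->
  exists N, C < sum_f_R0 (fun k => indicator (c k) (d k) y * (b k - a k)) N.
Proof.
  intros Huv Hab HC Hcov. apply NNPP. intros Hno.
  enough (v - u <= C) by lra.
  apply (weighted_cover_length a b (fun k => indicator (c k) (d k) y)); auto.
  - intros k. apply indicator_bounds.
  - intros x Hx. destruct (Hcov x Hx) as [i [Hxi Hyi]]. exists i.
    eapply Rle_trans; [|apply partial_sum_ge_term with (k := i)].
    + rewrite !indicator_in by auto. lra.
    + intros k. pose proof (indicator_bounds (c k) (d k) y).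
      pose proof (indicator_bounds (a k) (b k) x). nra.
    + lia.
  - intros N. apply Rnot_lt_le. intros Hlt. apply Hno. exists N. exact Hlt.
Qed.

Lemma fibre_contains_segment (K : pt -> Prop) : nonempty2 K -> compact2 K -> ifs_invariant K ->
  forall B y, 0 <= y <= 1 -> ~ (y = 1 \/ (y < 1 /\ exists N, fails B N y)) ->
  forall x, 0 <= x <= (/2) ^ B -> K (x, y).
Proof.
  intros Hne HC HI B y Hy Hgood. apply (segment_in_fibre K Hne HC HI).
  - destruct (Req_dec y 1); [exfalso; apply Hgood; auto|lra].
  - intros N HN. apply Hgood. right. split; [|eauto].
    destruct (Req_dec y 1); [exfalso; apply Hgood; auto|lra].
Qed.

(* Fubini in disguise: the heights outside the failure set (measure [<= 9/10])
   carry a segment of length [2^-5], which a box cover of area [2^-5 / 40]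
   can only cover on heights of measure [<= 1/20]. *)
Lemma K_positive_measure (K : pt -> Prop) : nonempty2 K -> compact2 K -> ifs_invariant K ->
  positive_measure2 K.
Proof.
  intros Hne HC HI Hnull.
  destruct (fail_set_cover 5) as [fa [fb [Hfab [Hfc Hfs]]]].
  set (dl := (/2) ^ 5). assert (Hdl : 0 < dl) by apply half_pow_pos.
  destruct (Hnull (dl / 40)) as [a [b [c [d [Hbox [Hcov Hsum]]]]]]; [lra|].
  assert (Hab : forall i, a i <= b i) by apply Hbox.
  enough (1 - 0 <= 9/10 + 1/20) by lra.
  apply (weighted_cover_two_families fa fb c d (fun k => (b k - a k) * (2 / dl))); auto.
  - lra.
  - apply Hbox.
  - intros k. pose proof (Hab k). apply Rmult_le_pos; [lra|].
    apply Rlt_le, Rdiv_lt_0_compat; lra.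
  - intros y Hy.
    destruct (classic (y = 1 \/ (y < 1 /\ exists N, fails 5 N y))) as [Hf|Hf]; [left; auto|right].
    destruct (segment_cover_boxes a b c d 0 dl y (dl / 2)) as [N HN]; auto; try lra.
    { intros x Hx. exact (Hcov (x, y) (fibre_contains_segment K Hne HC HI 5 y Hy Hf x Hx)). }
    exists N.
    rewrite (sum_eq _ (fun k => indicator (c k) (d k) y * (b k - a k) * (2 / dl))) by (intros; ring).
    rewrite <- scal_sum.
    apply (Rmult_le_reg_r (dl / 2)); [lra|].
    replace (2 / dl * sum_f_R0 (fun k => indicator (c k) (d k) y * (b k - a k)) N * (dl / 2))
      with (sum_f_R0 (fun k => indicator (c k) (d k) y * (b k - a k)) N) by (field; lra).
    lra.
  - intros N. specialize (Hfs N). simpl in Hfs. lra.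
  - intros N.
    rewrite (sum_eq _ (fun k => (b k - a k) * (d k - c k) * (2 / dl))) by (intros; ring).
    rewrite <- scal_sum. specialize (Hsum N).
    replace (1 / 20) with (2 / dl * (dl / 40)) by (field; lra).
    apply Rmult_le_compat_l; [apply Rlt_le, Rdiv_lt_0_compat|]; lra.
Qed.

Lemma K_fibres_ae (K : pt -> Prop) : nonempty2 K -> compact2 K -> ifs_invariant K ->
  null1 (fun y => 0 <= y <= 1 /\ ~ fibre_has_interval K y).
Proof.
  intros Hne HC HI eps Heps.
  destruct (pow_lt_1_zero (9/10)) with (y := eps) as [n Hn]; auto.
  { rewrite Rabs_right; lra. }
  specialize (Hn n (Nat.le_refl _)). rewrite Rabs_right in Hn by (apply Rle_ge, pow_le; lra).
  destruct (fail_set_cover (n + 4)) as [a [b [Hab [Hcov Hsum]]]].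
  replace (n + 4 - 4)%nat with n in Hsum by lia.
  exists a, b. split; [exact Hab|split].
  - intros y [Hy Hno]. apply Hcov; auto. apply NNPP. intros Hgood. apply Hno.
    exists 0, ((/2) ^ (n + 4)). split; [apply half_pow_pos|].
    apply (fibre_contains_segment K Hne HC HI (n + 4) y Hy Hgood).
  - intros N. specialize (Hsum N). lra.
Qed.

Theorem theorem1 (K : pt -> Prop) :
  nonempty2 K -> compact2 K -> ifs_invariant K ->
  positive_measure2 K /\ empty_interior2 K /\
  null1 (fun y => 0 <= y <= 1 /\ ~ fibre_has_interval K y).
Proof.
  intros Hne HC HI. split; [|split].
  - apply K_positive_measure; auto.
  - apply K_empty_interior; auto.
  - apply K_fibres_ae; auto.
Qed.
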